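(* Let $p=\langle P_0,\dots,P_k\rangle$ be a path in an MPDAG $\mathcal G$. Then $p$ is possibly causal if and only if $\mathcal G$ contains no directed path $P_i\leftarrow\cdots\leftarrow P_j$ (i.e. no directed path from $P_j$ to $P_i$) for any $0\le i<j\le k$.
   Context: An MPDAG $\mathcal G$ is a graph with directed ($\to$) and undirected ($-$) edges and no directed cycles, obtained from a CPDAG (the graph representing a Markov equivalence class of DAGs) by orienting some undirected edges and closing under Meek's orientation rules R1–R4; $[\mathcal G]$ is the set of DAGs with the same nodes, adjacencies and directed edges as $\mathcal G$. A path is a sequence of distinct nodes with successive nodes adjacent; a directed path is of the form $A\to\cdots\to B$. A path $\langle V_1,\dots,V_k\rangle$ is possibly causal if $\mathcal G$ contains no edge $V_i\leftarrow V_j$ with $1\le i<j\le k$. *)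

From mathcomp Require Import all_boot.

Set Implicit Arguments.
Unset Strict Implicit.
Unset Printing Implicit Defensive.

(* A partially directed graph on nodes T:
   gdir G x y  means  x -> y ;  gund G x y  means  x - y. *)
Record pgraph (T : finType) := PGraph { gdir : rel T ; gund : rel T }.

Section Graphs.
Variable T : finType.
Implicit Types (G D C : pgraph T) (x y a b c d : T).

Definition adj G x y : bool := [|| gdir G x y, gdir G y x | gund G x y].

Definition wf G : Prop :=
  (forall x, ~~ gdir G x x /\ ~~ gund G x x) /\
  (forall x y, gund G x y = gund G y x) /\
  (forall x y, ~~ (gdir G x y && gdir G y x)) /\
  (forall x y, ~~ (gdir G x y && gund G x y)).

Definition dir_path G x y : Prop :=
  exists s : seq T, [/\ path (gdir G) x s, last x s = y & uniq (x :: s)].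

Definition acyclic G : Prop := forall x y, gdir G x y -> ~ connect (gdir G) y x.

Definition is_DAG D : Prop :=
  wf D /\ (forall x y, gund D x y = false) /\ acyclic D.

Definition vstruct D a b c : Prop :=
  [/\ gdir D a b, gdir D c b, a != c & ~~ adj D a c].

Definition markov_equiv D1 D2 : Prop :=
  (forall x y, adj D1 x y = adj D2 x y) /\
  (forall a b c, vstruct D1 a b c <-> vstruct D2 a b c).

Definition is_CPDAG C : Prop :=
  exists D, is_DAG D /\
    (forall x y,
      (gdir C x y <-> (adj D x y /\
          forall D', is_DAG D' -> markov_equiv D D' -> gdir D' x y)) /\
      (gund C x y <-> ((exists D1, [/\ is_DAG D1, markov_equiv D D1 & gdir D1 x y]) /\
                       (exists D2, [/\ is_DAG D2, markov_equiv D D2 & gdir D2 y x])))).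

(* [G]: DAGs with the same nodes, adjacencies and directed edges as G *)
Definition in_class G D : Prop :=
  is_DAG D /\ (forall x y, adj D x y = adj G x y) /\
  (forall x y, gdir G x y -> gdir D x y).

Definition orient_some C G1 : Prop :=
  wf G1 /\
  (forall x y, gdir C x y -> gdir G1 x y) /\
  (forall x y, gdir G1 x y -> gdir C x y \/ gund C x y) /\
  (forall x y, gund G1 x y <-> [/\ gund C x y, ~~ gdir G1 x y & ~~ gdir G1 y x]).

(* Premises of Meek's rules R1-R4 for orienting the undirected edge a - b
   as a -> b. *)
Definition meek_R1 G a b : Prop :=
  exists c, [/\ gdir G c a, gund G a b, c != b & ~~ adj G c b].
Definition meek_R2 G a b : Prop :=
  exists c, [/\ gdir G a c, gdir G c b & gund G a b].
Definition meek_R3 G a b : Prop :=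
  exists c d, gund G a b /\ gund G a c /\ gund G a d /\ gdir G c b /\
                 gdir G d b /\ c != d /\ ~~ adj G c d.
Definition meek_R4 G a b : Prop :=
  exists c d, gund G a b /\ gund G a c /\ gdir G c d /\ gdir G d b /\
                 adj G a d /\ c != b /\ ~~ adj G c b.

Definition meek_applicable G a b : Prop :=
  meek_R1 G a b \/ meek_R2 G a b \/ meek_R3 G a b \/ meek_R4 G a b.

Definition orient_edge G a b G' : Prop :=
  (forall x y, gdir G' x y <-> (gdir G x y \/ (x = a /\ y = b))) /\
  (forall x y, gund G' x y <-> (gund G x y /\ ~ (x = a /\ y = b) /\ ~ (x = b /\ y = a))).

Definition meek_step G G' : Prop :=
  exists a b, meek_applicable G a b /\ orient_edge G a b G'.

Inductive meek_reach : pgraph T -> pgraph T -> Prop :=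
  | meek_refl G : meek_reach G G
  | meek_trans G G' G'' : meek_step G G' -> meek_reach G' G'' -> meek_reach G G''.

Definition meek_closed G : Prop := forall a b, ~ meek_applicable G a b.

(* MPDAG: acyclic graph obtained from a CPDAG C by orienting some undirected
   edges consistently with C (some DAG of [C] agrees with the new
   orientations) and closing under Meek's rules R1-R4. *)
Definition is_MPDAG G : Prop :=
  wf G /\ acyclic G /\
  exists C G1, [/\ is_CPDAG C, orient_some C G1,
                  (exists D, in_class G1 D) &
                  meek_reach G1 G /\ meek_closed G].

(* a path <P_0,...,P_k> given as P_0 :: s : distinct nodes, successive
   nodes adjacent *)
Definition is_path G (x : T) (s : seq T) : Prop :=
  uniq (x :: s) /\ path (adj G) x s.

Definition possibly_causal G (x : T) (s : seq T) : Prop :=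
  forall i j, i < j -> j < size (x :: s) ->
    ~~ gdir G (nth x (x :: s) j) (nth x (x :: s) i).

End Graphs.

(* By
   induction on the length of such a path x, V1, ..., y we show that no node
   of it reaches x by a directed path.  For the inner nodes this is the
   induction hypothesis applied to a prefix.  For the last node y, follow a
   directed path y ->* u -> x backwards: the Meek rules force u - V1 and
   forbid every edge w -> u from the path, so u, V1, ..., y is again possibly
   causal and the directed path to its head is shorter; it eventually ends in
   x = y, which is impossible. *)
From mathcomp Require Import all_boot zify.

Set Implicit Arguments.
Unset Strict Implicit.
Unset Printing Implicit Defensive.

Section PossiblyCausal.
Variables (T : finType) (G : pgraph T).

Definition pcausal (x : T) (s : seq T) : bool :=
  [&& uniq (x :: s), path (adj G) x s & pairwise (fun a b => ~~ gdir G b a) (x :: s)].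

Lemma pcausal_cons x y s :
  pcausal x (y :: s) =
  [&& x \notin y :: s, adj G x y, all (fun w => ~~ gdir G w x) (y :: s) & pcausal y s].
Proof. by rewrite /pcausal /= -!andbA; do !bool_congr. Qed.

Lemma pcausal_behead x y s : pcausal x (y :: s) -> pcausal y s.
Proof. by rewrite pcausal_cons => /and4P[]. Qed.

Lemma pcausal_not_pred_head x s w : pcausal x s -> w \in s -> ~~ gdir G w x.
Proof.
by case: s => // y s; rewrite pcausal_cons => /and4P[_ _ /allP s_nx _] /s_nx.
Qed.

Lemma pcausal_prefix x s1 s2 : pcausal x (s1 ++ s2) -> pcausal x s1.
Proof.
rewrite /pcausal -cat_cons cat_uniq cat_path pairwise_cat.
by case/and3P => /andP[-> _] /andP[-> _] /and3P[_ -> _].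
Qed.

Lemma pcausal_drop x s i :
  i <= size s -> pcausal x s -> pcausal (nth x (x :: s) i) (drop i s).
Proof.
elim: i x s => [|i IHi] x s; first by rewrite drop0.
case: s => [|y s] //= le_i pcx.
by rewrite (set_nth_default y) //; apply: IHi; last exact: pcausal_behead pcx.
Qed.

Lemma pcausalP x s : is_path G x s -> reflect (possibly_causal G x s) (pcausal x s).
Proof.
case=> uniq_xs path_xs; rewrite /pcausal uniq_xs path_xs.
apply: (iffP (pairwiseP x)) => [nback i j lt_ij lt_j | nback i j lt_i lt_j lt_ij].
  exact: nback (ltn_trans lt_ij lt_j) lt_j lt_ij.
exact: nback.
Qed.

Hypotheses (wfG : wf G) (acG : acyclic G) (meekG : meek_closed G).

Lemma gundC a b : gund G a b = gund G b a.
Proof. by case: wfG => _ []. Qed.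

Lemma adjC a b : adj G a b = adj G b a.
Proof. by rewrite /adj gundC; case: (gdir G a b); case: (gdir G b a). Qed.

Lemma gdir_not_gund a b : gdir G a b -> ~~ gund G a b.
Proof. by case: wfG => _ [_ [_ /(_ a b)]]; case: (gdir G a b). Qed.

Lemma meek_R1_adj c a b : gdir G c a -> gund G a b -> c != b -> adj G c b.
Proof.
move=> ca ab ne_cb; apply/negPn/negP => nadj_cb.
by apply: (@meekG a b); left; exists c.
Qed.

Lemma meek_R2_not_gund a c b : gdir G a c -> gdir G c b -> ~~ gund G a b.
Proof.
by move=> ac cb; apply/negP => ab; apply: (@meekG a b); right; left; exists c.
Qed.

Lemma meek_R4_adj a b c d :
  gund G a b -> gund G a c -> gdir G c d -> gdir G d b -> adj G a d -> c != b ->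
  adj G c b.
Proof.
move=> ab ac cd db ad ne_cb; apply/negPn/negP => nadj_cb.
by apply: (@meekG a b); right; right; right; exists c, d.
Qed.

Section InductionStep.
Variables (V1 : T) (s' : seq T).
Hypothesis IHs : forall t x, size t <= size s' -> pcausal x t ->
  forall v, v \in t -> ~ connect (gdir G) v x.
Local Notation y := (last V1 s').

Lemma no_dir_path_from_inner x w :
  pcausal x (V1 :: s') -> w \in V1 :: s' -> w != y -> ~ connect (gdir G) w x.
Proof.
move=> pcx w_s; move: pcx; have : size (V1 :: s') <= (size s').+1 by [].
rewrite -[y]/(last x (V1 :: s')).
case/splitPr: w_s => s1 [|a s2]; first by rewrite last_cat eqxx.
rewrite -cat_rcons size_cat => sz pcx _; apply: (@IHs (rcons s1 w) x).
- by move: sz; rewrite size_rcons /=; lia.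
- exact: pcausal_prefix pcx.
- by rewrite mem_rcons mem_head.
Qed.

Lemma no_dir_path_last_to_pred_head w :
  pcausal V1 s' -> gdir G w V1 -> ~ connect (gdir G) y w.
Proof.
move: IHs; case: s' => [|a t] IHt pcV1 wV1 yw; first exact: acG wV1 yw.
apply: IHt (leqnn _) pcV1 _ (mem_last a t) _.
exact: connect_trans yw (connect1 wV1).
Qed.

Lemma pcausal_reroot x u :
  pcausal x (V1 :: s') -> gdir G u x -> connect (gdir G) y u ->
  pcausal u (V1 :: s').
Proof.
move=> pcx ux yu; have yx := connect_trans yu (connect1 ux).
move: (pcx); rewrite pcausal_cons => /and4P[x_s xV1 _ pcV1].
have nux w : w \in V1 :: s' -> ~~ gdir G w x := pcausal_not_pred_head pcx.
have u_s : u \notin V1 :: s' by apply/negP => /nux; rewrite ux.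
have no_pred_V1 := no_dir_path_last_to_pred_head pcV1.
have xV1u : gund G x V1.
  case/or3P: xV1 => [xV1 | V1x | //].
  - by case: (no_pred_V1 x xV1 yx).
  - by move: (nux V1 (mem_head _ _)); rewrite V1x.
have uV1 : gund G u V1.
  have u_V1 : u != V1 by apply: contraNneq u_s => ->; apply: mem_head.
  case/or3P: (meek_R1_adj ux xV1u u_V1) => [uV1 | V1u | //].
  - by case: (no_pred_V1 u uV1 yu).
  - by move: (meek_R2_not_gund V1u ux); rewrite gundC xV1u.
rewrite pcausal_cons u_s /adj uV1 !orbT pcV1 andbT.
apply/allP => w w_s; apply/negP => wu.
have [w_y | w_ny] := eqVneq w y; last first.
  apply: no_dir_path_from_inner pcx w_s w_ny _.
  exact: connect_trans (connect1 wu) (connect1 ux).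
rewrite {w w_s}w_y in wu.
have y_s : y \in V1 :: s' := mem_last V1 s'.
have y_V1 : y != V1.
  by apply: contraTneq wu => ->; apply: contraTN uV1; rewrite gundC => /gdir_not_gund.
have y_x : y != x by apply: contraNneq x_s => <-.
case: (boolP (adj G x y)) => [|nadj_xy].
  case/or3P => [xy | yx' | xy].
  - exact: acG xy yx.
  - by move: (nux y y_s); rewrite yx'.
  - by move: (meek_R2_not_gund wu ux); rewrite gundC xy.
case: (boolP (adj G V1 y)) => [|nadj_V1y].
  case/or3P => [V1y | yV1 | V1y].
  - by move: (meek_R2_not_gund V1y wu); rewrite gundC uV1.
  - move: y_s; rewrite inE (negPf y_V1) => /(pcausal_not_pred_head pcV1).
    by rewrite yV1.
  - have V1x : gund G V1 x by rewrite gundC.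
    have V1u : adj G V1 u by rewrite adjC /adj uV1 !orbT.
    by move: (meek_R4_adj V1x V1y wu ux V1u y_x); rewrite adjC (negPf nadj_xy).
by move: (meek_R1_adj wu uV1 y_V1); rewrite adjC (negPf nadj_V1y).
Qed.

Lemma no_dir_path_from_last x : pcausal x (V1 :: s') -> ~ connect (gdir G) y x.
Proof.
move=> pcx /connectP[q]; elim/last_ind: q x pcx => [|q z IHq] x pcx.
  move=> _ /= x_y; move: pcx; rewrite pcausal_cons x_y => /andP[/negP[]].
  exact: mem_last.
rewrite rcons_path last_rcons => /andP[yq qz] x_z; rewrite -{z}x_z in qz.
apply: (IHq (last y q)) => //; apply: pcausal_reroot pcx qz _.
by apply/connectP; exists q.
Qed.

End InductionStep.

Lemma pcausal_no_dir_path_to_head x s v :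
  pcausal x s -> v \in s -> ~ connect (gdir G) v x.
Proof.
move: {2}(size s) (leqnn (size s)) => n.
elim: n s x v => [|n IHn] [|V1 s'] x v //= size_s' pcx v_s.
have IHs t x' : size t <= size s' -> pcausal x' t ->
    forall v', v' \in t -> ~ connect (gdir G) v' x'.
  move=> size_t pcx' v' v'_t; apply: IHn pcx' v'_t.
  exact: leq_trans size_t size_s'.
have [-> | v_ny] := eqVneq v (last V1 s'); first exact: no_dir_path_from_last.
exact: no_dir_path_from_inner v_s v_ny.
Qed.

Lemma pcausal_no_backward_dir_path x s i j :
  pcausal x s -> i < j -> j < size (x :: s) ->
  ~ connect (gdir G) (nth x (x :: s) j) (nth x (x :: s) i).
Proof.
move=> pcx lt_ij lt_j; have le_i : i <= size s by rewrite -ltnS (ltn_trans lt_ij).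
apply: pcausal_no_dir_path_to_head (pcausal_drop le_i pcx) _.
case: j lt_ij lt_j => // j le_ij lt_j /=.
rewrite -(subnKC (le_ij : i <= j)) -nth_drop mem_nth // size_drop.
by move: le_ij lt_j => /=; lia.
Qed.

End PossiblyCausal.

Lemma dir_path_connect (T : finType) (G : pgraph T) a b :
  dir_path G a b -> connect (gdir G) a b.
Proof. by case=> q [q_path <- _]; apply/connectP; exists q. Qed.

Lemma gdir_dir_path (T : finType) (G : pgraph T) a b :
  a != b -> gdir G a b -> dir_path G a b.
Proof. by move=> a_b ab; exists [:: b]; rewrite /= ab inE !andbT. Qed.

Theorem mainTheorem17 (T : finType) (G : pgraph T) (x : T) (s : seq T) :
  is_MPDAG G -> is_path G x s ->
  (possibly_causal G x s <->
   (forall i j, i < j -> j < size (x :: s) ->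
      ~ dir_path G (nth x (x :: s) j) (nth x (x :: s) i))).
Proof.
move=> [wfG [acG [_ [_ [_ _ _ [_ meekG]]]]]] xs_path.
split=> [/(pcausalP xs_path) pcx i j lt_ij lt_j /dir_path_connect |
          no_dir i j lt_ij lt_j].
  exact: pcausal_no_backward_dir_path.
apply/negP => ji; apply: (no_dir i j lt_ij lt_j); apply: gdir_dir_path ji.
by rewrite nth_uniq ?(ltn_trans lt_ij) //; [rewrite gtn_eqF | case: xs_path].
Qed.
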